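(* Let $\mathcal{A}=(Q,\delta,I,F)$ be a complete Büchi automaton, let $p,q\in Q$ with $p\preceq_{\mathit{de}}q$, let $\alpha$ be an infinite word and let $\mathcal{G}_\alpha=(V,E)$ be the run DAG of $\mathcal{A}$ over $\alpha$. Then for all $i\ge0$, if $(p,i)\in V$ and $(q,i)\in V$, then $\mathrm{rank}_\alpha(p,i)\le\lceil\mathrm{rank}_\alpha(q,i)\rceil$.
   Context: A Büchi automaton is $\mathcal{A}=(Q,\delta,I,F)$ over a finite alphabet $\Sigma$, $\delta:Q\times\Sigma\to2^Q$, complete if $\delta(q,a)\ne\emptyset$ always; $n=|Q|$. A run from $q$ on $\alpha=\alpha_0\alpha_1\cdots$ is a state sequence $\rho$ with $\rho_0=q$, $\rho_{i+1}\in\delta(\rho_i,\alpha_i)$. Delayed simulation: in the game from $(p_0,r_0)$, in round $i$ Spoiler picks $p_i\xrightarrow{\alpha_i}p_{i+1}$ and Duplicator answers $r_i\xrightarrow{\alpha_i}r_{i+1}$; a Duplicator strategy is a map $\sigma$ with $\sigma(r,p\xrightarrow{a}p')\in\delta(r,a)$ (no lookahead). Duplicator wins if for all $i$, $p_i\in F$ implies $r_k\in F$ for some $k\ge i$. $p\preceq_{\mathit{de}}r$ iff Duplicator has a winning strategy from $(p,r)$. Run DAG: $\mathcal{G}_\alpha=(V,E)$ with $V\subseteq Q\times\omega$, $(q,i)\in V$ iff some run of $\mathcal{A}$ over $\alpha$ from an initial state has $\rho_i=q$, and $((q,i),(q',i'))\in E$ iff $i'=i+1$ and $q'\in\delta(q,\alpha_i)$.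 A vertex $(p,i)$ is accepting if $p\in F$; it is finite in a subgraph if only finitely many vertices are reachable from it there, and endangered if it cannot reach an accepting vertex there. Ranks: let $\mathcal{G}^0=\mathcal{G}_\alpha$, $j=0$; repeat until fixpoint or for at most $2n+1$ steps: assign rank $j$ to all finite vertices of $\mathcal{G}^j$ and let $\mathcal{G}^{j+1}$ be $\mathcal{G}^j$ without them; assign rank $j+1$ to all endangered vertices of $\mathcal{G}^{j+1}$ and let $\mathcal{G}^{j+2}$ be $\mathcal{G}^{j+1}$ without them; set $j:=j+2$. Vertices never assigned a rank get rank $\omega$. $\mathrm{rank}_\alpha(v)$ denotes the rank of $v$. For $x\in\omega$, $\lceil x\rceil$ is the smallest even number $\ge x$, and $\lceil\omega\rceil=\omega$. *)

From mathcomp Require Import all_boot.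
Set Implicit Arguments. Unset Strict Implicit. Unset Printing Implicit Defensive.

Record buchi (Q Sigma : finType) := Buchi {
  delta : Q -> Sigma -> {set Q};
  init  : {set Q};
  acc   : {set Q} }.

Section Defs.
Variables (Q Sigma : finType) (A : buchi Q Sigma).

Definition complete : Prop := forall (q : Q) (a : Sigma), delta A q a != set0.

(** Duplicator strategy: sigma r p a p' = answer to Spoiler's move p -a-> p'
    when Duplicator is in r (no lookahead). *)
Definition dup_strategy := Q -> Q -> Sigma -> Q -> Q.

Definition valid_strategy (s : dup_strategy) : Prop :=
  forall r p a p', p' \in delta A p a -> s r p a p' \in delta A r a.

(** Duplicator's states r_0 r_1 ... in the play where Spoiler plays
    ps 0 -w 0-> ps 1 -w 1-> ps 2 ... *)
Fixpoint dup_play (s : dup_strategy) (r0 : Q) (ps : nat -> Q) (w : nat -> Sigma)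
    (k : nat) : Q :=
  match k with
  | 0 => r0
  | k'.+1 => s (dup_play s r0 ps w k') (ps k') (w k') (ps k'.+1)
  end.

Definition delayed_sim (p r : Q) : Prop :=
  exists s : dup_strategy, valid_strategy s /\
    forall (ps : nat -> Q) (w : nat -> Sigma),
      ps 0 = p ->
      (forall i, ps i.+1 \in delta A (ps i) (w i)) ->
      forall i, ps i \in acc A ->
        exists k, i <= k /\ dup_play s r ps w k \in acc A.

Variable alpha : nat -> Sigma.

Definition inV (q : Q) (i : nat) : Prop :=
  exists rho : nat -> Q, rho 0 \in init A /\
    (forall j, rho j.+1 \in delta A (rho j) (alpha j)) /\ rho i = q.

(** A subgraph is given by its vertex set (induced subgraph of G_alpha). *)
Definition vset := Q -> nat -> Prop.

Definition reach (S : vset) (q : Q) (i : nat) (q' : Q) (j : nat) : Prop :=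
  i <= j /\ exists rho : nat -> Q, rho i = q /\ rho j = q' /\
    (forall k, i <= k <= j -> S (rho k) k) /\
    (forall k, i <= k < j -> rho k.+1 \in delta A (rho k) (alpha k)).

Definition finite_in (S : vset) (q : Q) (i : nat) : Prop :=
  S q i /\ exists l : seq (Q * nat),
    forall q' j, reach S q i q' j -> (q', j) \in l.

Definition endangered_in (S : vset) (q : Q) (i : nat) : Prop :=
  S q i /\ ~ exists q' j, reach S q i q' j /\ q' \in acc A.

Fixpoint Gsub (j : nat) : vset :=
  match j with
  | 0 => inV
  | j'.+1 => fun q i => Gsub j' q i /\
       ~ (if odd j' then endangered_in (Gsub j') q i else finite_in (Gsub j') q i)
  end.

(** Ranks: a vertex gets rank j (j <= 2n, i.e. at most 2n+1 removal steps)
    if it is removed when passing from G^j to G^{j+1}; otherwise omega.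
    Rank values: Some j = j, None = omega. *)
Definition is_rank (q : Q) (i : nat) (r : option nat) : Prop :=
  match r with
  | Some j => j < (2 * #|Q|).+1 /\ Gsub j q i /\ ~ Gsub j.+1 q i
  | None => forall j, j < (2 * #|Q|).+1 -> ~ (Gsub j q i /\ ~ Gsub j.+1 q i)
  end.

End Defs.

Definition ceil_even (r : option nat) : option nat :=
  match r with
  | Some x => Some (if odd x then x.+1 else x)
  | None => None
  end.

Definition rank_le (a b : option nat) : Prop :=
  match a, b with
  | _, None => True
  | Some x, Some y => x <= y
  | None, Some _ => False
  end.

From mathcomp Require Import all_boot zify.
From Stdlib Require Import Classical ClassicalEpsilon.
Set Implicit Arguments. Unset Strict Implicit. Unset Printing Implicit Defensive.

(* Every level G^j of the rank construction is closed under delayed simulation: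
   if (p,i) is in G^j, p <=_de q and (q,i) is a vertex, then (q,i) is in G^j.
   By induction on j, Duplicator's answers to a path of G^j from (p,i) form a
   path of G^j from (q,i) reaching the same levels.  Hence if p reaches
   unboundedly many levels (equivalently, since Q is finite, infinitely many
   vertices), so does q; and if p reaches an accepting vertex in G^j with j odd,
   then, as every vertex of G^j has a successor in G^j, Spoiler's path continues
   forever inside G^j and the delayed acceptance of Duplicator also happens in
   G^j.  So q is removed no later than p, i.e. rank p <= rank q, which is even
   stronger than the claim. *)

Definition splice (T : Type) (f : nat -> T) (m : nat) (g : nat -> T) (k : nat) : T :=
  if k < m then f k else g (k - m).

Lemma splice_addn (T : Type) (f g : nat -> T) m d : splice f m g (m + d) = g d.
Proof. by rewrite /splice ltnNge leq_addr addKn. Qed.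

Section Plays.
Variables (Q Sigma : finType) (s : dup_strategy Q Sigma).

Lemma eq_dup_play r ps ps' w w' k :
  (forall j, j <= k -> ps j = ps' j) -> (forall j, j < k -> w j = w' j) ->
  dup_play s r ps w k = dup_play s r ps' w' k.
Proof.
elim: k => [|k IH] eq_ps eq_w //=.
by rewrite IH ?eq_ps ?eq_w // => j lt_jk; [apply: eq_ps | apply: eq_w]; lia.
Qed.

Lemma dup_play_addn r ps w m d :
  dup_play s r ps w (m + d) =
  dup_play s (dup_play s r ps w m) (fun j => ps (m + j)) (fun j => w (m + j)) d.
Proof. by elim: d => [|d IH] /=; rewrite ?addn0 // !addnS /= IH. Qed.

End Plays.

Section Game.
Variables (Q Sigma : finType) (A : buchi Q Sigma).

Definition play (ps : nat -> Q) (w : nat -> Sigma) : Prop :=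
  forall i, ps i.+1 \in delta A (ps i) (w i).

(* [delayed_sim A p r] unfolds to [exists s, valid_strategy A s /\ winning A s p r]. *)
Definition winning (s : dup_strategy Q Sigma) (p r : Q) : Prop :=
  forall ps w, ps 0 = p -> play ps w ->
    forall i, ps i \in acc A -> exists k, i <= k /\ dup_play s r ps w k \in acc A.

Lemma play_shift ps w i :
  (forall k, i <= k -> ps k.+1 \in delta A (ps k) (w k)) ->
  play (fun e => ps (i + e)) (fun e => w (i + e)).
Proof. by move=> path_ps e; rewrite addnS; apply: path_ps; rewrite leq_addr. Qed.

Lemma play_splice ps w ps' w' m :
  play ps w -> play ps' w' -> ps' 0 = ps m -> play (splice ps m ps') (splice w m w').
Proof.
move=> play_ps play_ps' ps'0 k; rewrite /splice.
case: (ltnP k.+1 m) => [lt_k1m | le_mk1]; first by rewrite (ltnW lt_k1m).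
case: (ltnP k m) => [lt_km | le_mk].
  have Em : m = k.+1 by lia.
  by rewrite Em subnn ps'0 Em; apply: play_ps.
by rewrite subSn.
Qed.

Lemma winning_dup_play s p r ps w m :
  ps 0 = p -> play ps w -> winning s p r -> winning s (ps m) (dup_play s r ps w m).
Proof.
move=> ps0 play_ps win ps' w' ps'0 play_ps' i acc_i.
have play_cat := play_splice play_ps play_ps' ps'0.
have prefix : dup_play s r (splice ps m ps') (splice w m w') m = dup_play s r ps w m.
  apply: eq_dup_play => j le_jm; rewrite /splice.
    case: ltnP => // le_mj; have Ejm : j = m by lia.
    by rewrite Ejm subnn.
  by rewrite le_jm.
have [k [le_k acc_k]] : exists k, m + i <= k /\
    dup_play s r (splice ps m ps') (splice w m w') k \in acc A.
  apply: win => //; last by rewrite splice_addn.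
  by rewrite /splice; case: posnP => [m0|//]; rewrite m0 ps'0 m0.
exists (k - m); split; first by lia.
rewrite -(subnKC (leq_trans (leq_addr i m) le_k)) dup_play_addn prefix in acc_k.
by rewrite -(eq_dup_play s _ (fun j _ => splice_addn ps ps' m j)
  (fun j _ => splice_addn w w' m j)).
Qed.

End Game.

Section RunDag.
Variables (Q Sigma : finType) (A : buchi Q Sigma) (alpha : nat -> Sigma).

Definition succ_closed (P : vset Q) : Prop :=
  forall x k, P x k -> exists2 y, y \in delta A x (alpha k) & P y k.+1.

Lemma succ_closed_extend P rho i j :
  succ_closed P -> P (rho j) j ->
  (forall k, i <= k < j -> rho k.+1 \in delta A (rho k) (alpha k)) ->
  exists pi : nat -> Q, [/\ forall k, k <= j -> pi k = rho k,
    forall k, j <= k -> P (pi k) k &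
    forall k, i <= k -> pi k.+1 \in delta A (pi k) (alpha k)].
Proof.
move=> closedP Pj path_rho.
have [g Hg] : exists g : Q * nat -> Q, forall xk, P xk.1 xk.2 ->
    g xk \in delta A xk.1 (alpha xk.2) /\ P (g xk) xk.2.+1.
  apply: (choice (fun (xk : Q * nat) y =>
    P xk.1 xk.2 -> y \in delta A xk.1 (alpha xk.2) /\ P y xk.2.+1)) => -[x k] /=.
  have [/closedP [y y_succ Py] | nPxk] := classic (P x k); first by exists y.
  by exists x.
pose run d := iteri d (fun e y => g (y, j + e)) (rho j).
have P_run d : P (run d) (j + d).
  by elim: d => [|d IH]; rewrite ?addn0 // addnS; case: (Hg (_, _) IH).
pose pi k := if k <= j then rho k else run (k - j).
have pi_run k : j <= k -> pi k = run (k - j).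
  rewrite /pi leq_eqVlt => /orP[/eqP <-|lt_jk]; first by rewrite leqnn subnn.
  by rewrite leqNgt lt_jk.
exists pi; split=> [k le_kj | k le_jk | k le_ik]; first by rewrite /pi le_kj.
  by rewrite pi_run // -{2}(subnKC le_jk).
case: (ltnP k j) => [lt_kj | le_jk].
  by rewrite /pi lt_kj (ltnW lt_kj); apply: path_rho; rewrite le_ik.
rewrite !pi_run ?(leqW le_jk) // subSn //=.
by have [] := Hg (_, _) (P_run (k - j)); rewrite /= subnKC.
Qed.

Lemma finite_inP S x i :
  finite_in A alpha S x i <->
  S x i /\ exists M, forall y j, reach A alpha S x i y j -> j <= M.
Proof.
split=> -[Sx [l bound_l]]; split=> //.
  exists (\max_(yj <- l) yj.2) => y j /bound_l y_in_l.
  exact: (leq_bigmax_seq (F := snd) _ y_in_l).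
exists [seq (y, j) | y <- enum Q, j <- iota 0 l.+1] => y j /bound_l le_jl.
by apply: allpairs_f; rewrite ?mem_enum ?mem_iota.
Qed.

Lemma reach_behead S x k z j :
  reach A alpha S x k z j -> k < j ->
  exists2 y, y \in delta A x (alpha k) & reach A alpha S y k.+1 z j.
Proof.
case=> _ [rho [rho_k [rho_j [S_rho path_rho]]]] lt_kj.
exists (rho k.+1); first by rewrite -rho_k; apply: path_rho; rewrite leqnn.
split=> //; exists rho; split=> //; split=> //; split=> l /andP[lt_kl le_lj].
  by apply: S_rho; rewrite le_lj ltnW.
by apply: path_rho; rewrite le_lj ltnW.
Qed.

Lemma succ_closed_nonfinite S :
  succ_closed (fun x k => S x k /\ ~ finite_in A alpha S x k).
Proof.
move=> x k [Sx nfin_x]; apply: NNPP => nsucc; apply: nfin_x.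
(* Otherwise all successors of x in S are finite, and the maximum of their
   level bounds bounds the levels reachable from x. *)
have [M bound_M] : exists M : Q -> nat, forall y, y \in delta A x (alpha k) ->
    S y k.+1 -> forall z j, reach A alpha S y k.+1 z j -> j <= M y.
  apply: (choice (fun y M => y \in delta A x (alpha k) ->
    S y k.+1 -> forall z j, reach A alpha S y k.+1 z j -> j <= M)) => y.
  have [y_succ | ny_succ] := classic (y \in delta A x (alpha k)); last by exists 0.
  have [Sy | nSy] := classic (S y k.+1); last by exists 0.
  have /finite_inP [_ [M bound]] : finite_in A alpha S y k.+1.
    by apply: NNPP => nfin_y; apply: nsucc; exists y.
  by exists M.
apply/finite_inP; split=> //; exists (maxn k (\max_y M y)) => z j reach_z.
case: (ltnP k j) => [lt_kj | le_jk]; last by rewrite leq_max le_jk.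
have [y y_succ reach_y] := reach_behead reach_z lt_kj.
have Sy : S y k.+1.
  by case: reach_y => _ [rho [<- [_ [S_rho _]]]]; apply: S_rho; rewrite leqnn lt_kj.
rewrite leq_max; apply/orP; right.
exact: leq_trans (bound_M y y_succ Sy z j reach_y) (leq_bigmax y).
Qed.

Lemma Gsub_succ_closed j : odd j -> succ_closed (Gsub A alpha j).
Proof.
case: j => //= j /negbTE even_j x k /=; rewrite even_j.
exact: succ_closed_nonfinite.
Qed.

Section Complete.
Hypothesis A_complete : complete A.

Lemma succ_closedT : succ_closed (fun _ _ => True).
Proof. by move=> x k _; case/set0Pn: (A_complete x (alpha k)) => y; exists y. Qed.

Lemma inV_succ x k y :
  inV A alpha x k -> y \in delta A x (alpha k) -> inV A alpha y k.+1.
Proof.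
case=> rho [init_rho [run_rho rho_k]] y_succ.
pose rho' j := if j <= k then rho j else y.
have [|pi [pi_rho _ path_pi]] :=
  succ_closed_extend (rho := rho') (i := 0) (j := k.+1) succ_closedT I.
  move=> j /andP[_ le_jk]; rewrite ltnS in le_jk; rewrite /rho' le_jk.
  case: ltnP => [_ | le_kj]; first exact: run_rho.
  have Ejk : j = k by lia.
  by rewrite Ejk rho_k.
exists pi; rewrite !pi_rho // /rho' ltnn; split=> //; split=> // j.
exact: path_pi.
Qed.

Definition sim_closed (S : vset Q) : Prop :=
  forall i p q, delayed_sim A p q -> inV A alpha q i -> S p i -> S q i.

Lemma reach_dup_play S s p q i pi d :
  sim_closed S -> valid_strategy A s -> winning A s p q -> inV A alpha q i ->
  pi i = p -> (forall k, i <= k -> pi k.+1 \in delta A (pi k) (alpha k)) ->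
  (forall k, i <= k <= i + d -> S (pi k) k) ->
  reach A alpha S q i
    (dup_play s q (fun e => pi (i + e)) (fun e => alpha (i + e)) d) (i + d).
Proof.
move=> closedS valid_s win Vq pi_i path_pi S_pi.
set r := dup_play s q _ _.
have play_pi := play_shift path_pi.
have path_r e : r e.+1 \in delta A (r e) (alpha (i + e)) by apply/valid_s/play_pi.
have V_r e : inV A alpha (r e) (i + e).
  by elim: e => [|e IH]; rewrite ?addn0 // addnS; apply: inV_succ IH (path_r e).
have S_r e : e <= d -> S (r e) (i + e).
  move=> le_ed; apply: (closedS _ (pi (i + e))) => //.
    exists s; split=> //; apply: winning_dup_play play_pi win.
    by rewrite addn0.
  by apply: S_pi; rewrite leq_addr leq_add2l.
split; first exact: leq_addr.
exists (fun k => r (k - i)); rewrite subnn addKn; split=> //; split=> //.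
split=> k /andP[le_ik le_kid]; rewrite -(subnKC le_ik).
  by rewrite addKn; apply: S_r; rewrite leq_subLR.
by rewrite -addnS !addKn.
Qed.

Lemma reach_sim S p q i x j :
  sim_closed S -> delayed_sim A p q -> inV A alpha q i ->
  reach A alpha S p i x j -> exists y, reach A alpha S q i y j.
Proof.
move=> closedS [s [valid_s win]] Vq [le_ij [rho [rho_i [_ [S_rho path_rho]]]]].
have [pi [pi_rho _ path_pi]] := succ_closed_extend succ_closedT I path_rho.
have := reach_dup_play (d := j - i) closedS valid_s win Vq _ path_pi.
rewrite subnKC // pi_rho // => /(_ rho_i) reach_q; eexists; apply: reach_q.
by move=> k /andP[le_ik le_kj]; rewrite pi_rho //; apply/S_rho/andP.
Qed.

Lemma finite_in_sim S p q i :
  sim_closed S -> delayed_sim A p q -> inV A alpha q i -> S p i ->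
  finite_in A alpha S q i -> finite_in A alpha S p i.
Proof.
move=> closedS sim_pq Vq Sp /finite_inP [_ [M bound_q]].
apply/finite_inP; split=> //; exists M => x j /(reach_sim closedS sim_pq Vq) [y].
exact: bound_q.
Qed.

Lemma endangered_in_sim S p q i :
  sim_closed S -> succ_closed S -> delayed_sim A p q -> inV A alpha q i ->
  S p i -> endangered_in A alpha S q i -> endangered_in A alpha S p i.
Proof.
move=> closedS succS [s [valid_s win]] Vq Sp [_ no_acc_q]; split=> //.
case=> x [j [[le_ij [rho [rho_i [rho_j [S_rho path_rho]]]]] acc_x]].
have S_j : S (rho j) j by apply: S_rho; rewrite le_ij leqnn.
have [pi [pi_rho S_pi path_pi]] := succ_closed_extend succS S_j path_rho.
have S_pi_from k : i <= k -> S (pi k) k.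
  move=> le_ik; case: (leqP k j) => [le_kj | /ltnW le_jk]; last exact: S_pi.
  by rewrite pi_rho //; apply/S_rho/andP.
have pi_i : pi (i + 0) = p by rewrite addn0 pi_rho.
have acc_j : pi (i + (j - i)) \in acc A by rewrite subnKC // pi_rho // rho_j.
have [d [_ acc_d]] := win _ _ pi_i (play_shift path_pi) _ acc_j.
apply: no_acc_q; exists (dup_play s q (fun e => pi (i + e)) (fun e => alpha (i + e)) d).
exists (i + d); split=> //.
apply: (reach_dup_play (p := p)) => //; first by rewrite pi_rho.
by move=> k /andP[le_ik _]; apply: S_pi_from.
Qed.

Lemma Gsub_sim_closed j : sim_closed (Gsub A alpha j).
Proof.
elim: j => [|j IH] i p q sim_pq Vq //= [Gp kept_p].
split; first exact: IH sim_pq Vq Gp.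
case: ifP kept_p => odd_j kept_p removed_q; apply: kept_p.
  exact: endangered_in_sim IH (Gsub_succ_closed odd_j) sim_pq Vq Gp removed_q.
exact: finite_in_sim IH sim_pq Vq Gp removed_q.
Qed.

End Complete.

Lemma Gsub_le a b x i : a <= b -> Gsub A alpha b x i -> Gsub A alpha a x i.
Proof.
elim: b => [|b IH]; first by rewrite leqn0 => /eqP ->.
rewrite leq_eqVlt => /orP[/eqP -> // | le_ab] /= [Gb _].
exact: IH.
Qed.

Lemma is_rank_None_Gsub x i j :
  inV A alpha x i -> is_rank A alpha x i None -> j <= (2 * #|Q|).+1 ->
  Gsub A alpha j x i.
Proof.
move=> Vx never_removed; elim: j => [//|j IH] lt_j.
have Gj := IH (ltnW lt_j).
apply: NNPP => nGj1; exact: never_removed j lt_j (conj Gj nGj1).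
Qed.

Lemma rank_le_of_Gsub x y i rx ry :
  inV A alpha x i -> (forall j, Gsub A alpha j x i -> Gsub A alpha j y i) ->
  is_rank A alpha x i rx -> is_rank A alpha y i ry -> rank_le rx ry.
Proof.
move=> Vx Gxy rank_x; case: ry => [m [lt_m [_ nGy]] | ]; last by case: rx rank_x.
have nGx : ~ Gsub A alpha m.+1 x i by move/Gxy.
case: rx rank_x => [n [_ [Gx _]] | never_removed] /=.
  by rewrite leqNgt; apply/negP => lt_mn; apply/nGx/(Gsub_le lt_mn).
exact/nGx/(is_rank_None_Gsub Vx never_removed).
Qed.

End RunDag.

Lemma rank_le_ceil_even a b : rank_le a b -> rank_le a (ceil_even b).
Proof. by case: a b => [x|] [y|] //=; case: odd => // /leqW. Qed.

Theorem lemma6 (Q Sigma : finType) (A : buchi Q Sigma) (p q : Q)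
    (alpha : nat -> Sigma) :
  complete A ->
  delayed_sim A p q ->
  forall (i : nat) (rp rq : option nat),
    inV A alpha p i -> inV A alpha q i ->
    is_rank A alpha p i rp -> is_rank A alpha q i rq ->
    rank_le rp (ceil_even rq).
Proof.
move=> A_complete sim_pq i rp rq Vp Vq rank_p rank_q.
apply/rank_le_ceil_even/(rank_le_of_Gsub Vp _ rank_p rank_q) => j.
exact: Gsub_sim_closed sim_pq Vq.
Qed.
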